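(* Let $k\geq2$ be an integer. The function $\psi_k(x)$ is strictly decreasing on $x>k$.
   Context: $f_t(\lambda)=e^{-\lambda}\sum_{i\geq t}\lambda^i/i!$. For $x>k$, let $\lambda=\lambda(x)>0$ be the unique positive root of $\lambda f_{k-1}(\lambda)=xf_k(\lambda)$, and define $\psi_k(x)=\frac{e^{-\lambda}\lambda^{k-1}}{f_{k-1}(\lambda)\,(k-1)!}$. *)

From Stdlib Require Import Reals ClassicalEpsilon.
From Coquelicot Require Import Coquelicot.
Open Scope R_scope.

(* f_t(l) = e^{-l} * sum_{i >= t} l^i / i!  (Poisson upper tail) *)
Definition f (t : nat) (l : R) : R :=
  exp (- l) * Series (fun i : nat => if Nat.leb t i then l ^ i / INR (Factorial.fact i) else 0).

Definition is_lambda (k : nat) (x l : R) : Prop :=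
  0 < l /\ l * f (k - 1) l = x * f k l.

(* lambda_k(x): "the" positive root (chosen by Hilbert's epsilon; the paper
   asserts it is unique for x > k). *)
Definition lambda (k : nat) (x : R) : R :=
  epsilon (inhabits 0) (is_lambda k x).

Definition psi (k : nat) (x : R) : R :=
  let l := lambda k x in
  exp (- l) * l ^ (k - 1) / (f (k - 1) l * INR (Factorial.fact (k - 1))).

From Pilot Require Import Defs.
From Stdlib Require Import Reals Lra Lia ClassicalEpsilon.
From Coquelicot Require Import Coquelicot.
Open Scope R_scope.

(** Write [k = m + 1] and [E_t(l) = sum_n l^n / (t + n)!], so that
    [f_t(l) = e^{-l} l^t E_t(l)] and [E_m = 1/m! + l E_{m+1}].  Dividing the
    root condition by [e^{-l} l^k E_k(l)] shows that [lambda] inverts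
    [l |-> l + 1/(m! E_k(l))], while [psi_k(x) = 1/(m! E_m(lambda(x)))].
    The inverted map is strictly increasing because [E_k' < m! E_k^2], which
    holds coefficientwise by an elementary factorial inequality; hence
    [lambda] is increasing, and [psi_k] decreasing since [E_m] is increasing. *)

Definition exp_tail_coef (k n : nat) : R := / INR (Factorial.fact (k + n)).

Definition exp_tail (k : nat) (l : R) : R := PSeries (exp_tail_coef k) l.

Lemma exp_tail_coef_pos k n : 0 < exp_tail_coef k n.
Proof. apply Rinv_0_lt_compat, INR_fact_lt_0. Qed.

Lemma CV_radius_exp_tail_coef k : CV_radius (exp_tail_coef k) = p_infty.
Proof.
  apply CV_radius_infinite_DAlembert.
  { intro n; apply Rgt_not_eq, exp_tail_coef_pos. }
  apply is_lim_seq_ext with (fun n => / INR (n + S k)).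
  - intro n. unfold exp_tail_coef.
    replace (k + S n)%nat with (S (k + n)) by lia.
    replace (n + S k)%nat with (S (k + n)) by lia.
    rewrite fact_simpl, mult_INR.
    assert (Hf := INR_fact_lt_0 (k + n)).
    assert (HS : 0 < INR (S (k + n))) by (apply lt_0_INR; lia).
    replace (/ (INR (S (k + n)) * INR (Factorial.fact (k + n))) / / INR (Factorial.fact (k + n)))
      with (/ INR (S (k + n))) by (field; lra).
    symmetry; apply Rabs_pos_eq, Rlt_le, Rinv_0_lt_compat, HS.
  - replace (Finite 0) with (Rbar_inv p_infty) by reflexivity.
    apply is_lim_seq_inv; [|discriminate].
    apply (is_lim_seq_incr_n INR (S k)), is_lim_seq_INR.
Qed.

Lemma exp_tail_inside k l : Rbar_lt (Rabs l) (CV_radius (exp_tail_coef k)).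
Proof. rewrite CV_radius_exp_tail_coef. exact I. Qed.

Lemma ex_series_exp_tail k l : ex_series (fun n => exp_tail_coef k n * l ^ n).
Proof. apply ex_pseries_R, CV_radius_inside, exp_tail_inside. Qed.

Lemma f_exp_tail (t : nat) (l : R) : Defs.f t l = exp (- l) * (l ^ t * exp_tail t l).
Proof.
  unfold Defs.f, exp_tail, PSeries. f_equal.
  set (u := fun i : nat => _).
  assert (Hshift : forall n, u (t + n)%nat = l ^ t * (exp_tail_coef t n * l ^ n)).
  { intro n. unfold u, exp_tail_coef.
    replace (Nat.leb t (t + n)) with true by (symmetry; apply Nat.leb_le; lia).
    rewrite pow_add. unfold Rdiv. ring. }
  rewrite <- Series_scal_l.
  destruct t as [|t].
  { apply Series_ext. intro n. exact (Hshift n). }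
  assert (Hex : ex_series u).
  { apply (ex_series_incr_n u (S t)).
    apply ex_series_ext with (fun n => scal (l ^ S t) (exp_tail_coef (S t) n * l ^ n)).
    - intro n. rewrite Hshift. reflexivity.
    - apply (@ex_series_scal_l R_AbsRing R_NormedModule), ex_series_exp_tail. }
  rewrite (Series_incr_n u (S t)) by (lia || exact Hex).
  rewrite sum_eq_R0, Rplus_0_l.
  - apply Series_ext. exact Hshift.
  - intros n Hn. unfold u.
    replace (Nat.leb (S t) n) with false by (symmetry; apply Nat.leb_gt; lia).
    reflexivity.
Qed.

Lemma exp_tail_S m l :
  exp_tail m l = / INR (Factorial.fact m) + l * exp_tail (S m) l.
Proof.
  unfold exp_tail. rewrite PSeries_decr_1.
  - unfold exp_tail_coef at 1. rewrite Nat.add_0_r. do 2 f_equal.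
    apply PSeries_ext. intro n. unfold PS_decr_1, exp_tail_coef.
    do 3 f_equal. lia.
  - apply CV_radius_inside, exp_tail_inside.
Qed.

Lemma exp_tail_le k l1 l2 : 0 <= l1 <= l2 -> exp_tail k l1 <= exp_tail k l2.
Proof.
  intro Hl. unfold exp_tail, PSeries.
  apply Series_le; [|apply ex_series_exp_tail].
  intro n. assert (Ha := exp_tail_coef_pos k n). split.
  - apply Rmult_le_pos; [lra|apply pow_le; lra].
  - apply Rmult_le_compat_l; [lra|apply pow_incr; lra].
Qed.

Lemma inv_fact_le_exp_tail k l : 0 <= l -> / INR (Factorial.fact k) <= exp_tail k l.
Proof.
  intro Hl. replace (/ INR (Factorial.fact k)) with (exp_tail k 0).
  - apply exp_tail_le. lra.
  - unfold exp_tail. rewrite PSeries_0. unfold exp_tail_coef. now rewrite Nat.add_0_r.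
Qed.

Lemma exp_tail_pos k l : 0 <= l -> 0 < exp_tail k l.
Proof.
  intro Hl. eapply Rlt_le_trans; [|exact (inv_fact_le_exp_tail k l Hl)].
  apply Rinv_0_lt_compat, INR_fact_lt_0.
Qed.

Lemma exp_tail_lt m l1 l2 : 0 <= l1 -> l1 < l2 -> exp_tail m l1 < exp_tail m l2.
Proof.
  intros H1 H12. rewrite !(exp_tail_S m).
  assert (Hpos := exp_tail_pos (S m) l1 H1).
  assert (Hle := exp_tail_le (S m) l1 l2 (conj H1 (Rlt_le _ _ H12))).
  apply Rplus_lt_compat_l.
  apply Rlt_le_trans with (l2 * exp_tail (S m) l1); [apply Rmult_lt_compat_r|apply Rmult_le_compat_l]; lra.
Qed.

Lemma fact_shift_mul_le m n p : (m <= n)%nat ->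
  (Factorial.fact (S m + p) * Factorial.fact n <= Factorial.fact m * Factorial.fact (S n + p))%nat.
Proof.
  intro Hmn. induction p as [|p IH].
  - rewrite !Nat.add_0_r, !fact_simpl.
    assert (Factorial.fact m * Factorial.fact n * S m <= Factorial.fact m * Factorial.fact n * S n)%nat
      by (apply Nat.mul_le_mono_l; lia).
    nia.
  - replace (S m + S p)%nat with (S (S m + p)) by lia.
    replace (S n + S p)%nat with (S (S n + p)) by lia.
    rewrite !fact_simpl.
    assert (Hs : (S (S m + p) <= S (S n + p))%nat) by lia.
    assert (H := Nat.mul_le_mono _ _ _ _ Hs IH). nia.
Qed.

Lemma exp_tail_coef_le_mul m n j : (j <= n)%nat ->
  exp_tail_coef (S m) (S n)
  <= INR (Factorial.fact m) * (exp_tail_coef (S m) j * exp_tail_coef (S m) (n - j)).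
Proof.
  intro Hj. unfold exp_tail_coef.
  assert (H := fact_shift_mul_le m (S m + (n - j)) j ltac:(lia)).
  replace (S (S m + (n - j)) + j)%nat with (S m + S n)%nat in H by lia.
  apply le_INR in H. rewrite !mult_INR in H.
  assert (P1 := INR_fact_lt_0 (S m + j)). assert (P2 := INR_fact_lt_0 (S m + (n - j))).
  assert (P3 := INR_fact_lt_0 (S m + S n)). assert (P4 := INR_fact_lt_0 m).
  set (A := INR (Factorial.fact (S m + j))) in *.
  set (B := INR (Factorial.fact (S m + (n - j)))) in *.
  set (C := INR (Factorial.fact (S m + S n))) in *.
  set (c := INR (Factorial.fact m)) in *.
  replace (c * (/ A * / B)) with (/ (A * B / c)) by (field; lra).
  apply Rinv_le_contravar.
  - apply Rdiv_lt_0_compat; [nra|lra].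
  - apply (Rmult_le_reg_r c); [lra|]. unfold Rdiv. rewrite Rmult_assoc, Rinv_l by lra. lra.
Qed.

Lemma exp_tail_coef_1_lt m :
  exp_tail_coef (S m) 1 < INR (Factorial.fact m) * (exp_tail_coef (S m) 0 * exp_tail_coef (S m) 0).
Proof.
  unfold exp_tail_coef. rewrite Nat.add_0_r, Nat.add_1_r, !fact_simpl, !mult_INR.
  assert (Hc := INR_fact_lt_0 m). assert (Hm := pos_INR m). rewrite !S_INR.
  set (c := INR (Factorial.fact m)) in *. set (x := INR m) in *.
  replace (c * (/ ((x + 1) * c) * / ((x + 1) * c))) with (/ ((x + 1) * ((x + 1) * c)))
    by (field; lra).
  apply Rinv_lt_contravar; [apply Rmult_lt_0_compat; nra|].
  apply Rmult_lt_compat_r; nra.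
Qed.

Lemma exp_tail_derive_lt m l : 0 <= l ->
  PSeries (PS_derive (exp_tail_coef (S m))) l
  < INR (Factorial.fact m) * (exp_tail (S m) l * exp_tail (S m) l).
Proof.
  intro Hl. set (a := exp_tail_coef (S m)). set (c := INR (Factorial.fact m)).
  unfold exp_tail. fold a. rewrite <- PSeries_mult by apply exp_tail_inside. unfold PSeries.
  assert (Emul : ex_series (fun n => PS_mult a a n * l ^ n)).
  { apply ex_pseries_R, ex_pseries_mult; apply exp_tail_inside. }
  assert (Eder : ex_series (fun n => PS_derive a n * l ^ n)).
  { apply ex_pseries_R, ex_pseries_derive, exp_tail_inside. }
  rewrite (Series_incr_1 _ Emul), (Series_incr_1 _ Eder).
  assert (Etail : ex_series (fun n => c * (PS_mult a a (S n) * l ^ S n))).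
  { apply (@ex_series_scal_l R_AbsRing R_NormedModule).
    exact (proj1 (ex_series_incr_1 (fun n => PS_mult a a n * l ^ n)) Emul). }
  assert (Hhead : PS_derive a 0 * l ^ 0 < c * (PS_mult a a 0 * l ^ 0)).
  { unfold PS_derive, PS_mult. simpl. rewrite !Rmult_1_r, Rmult_1_l.
    apply exp_tail_coef_1_lt. }
  assert (Htail : Series (fun n => PS_derive a (S n) * l ^ S n)
                  <= c * Series (fun n => PS_mult a a (S n) * l ^ S n)).
  { rewrite <- Series_scal_l. apply Series_le; [|exact Etail].
    intro n. assert (Ha := exp_tail_coef_pos (S m) (S (S n))). fold a in Ha.
    assert (Hp := pow_le l (S n) Hl). unfold PS_derive. split.
    - apply Rmult_le_pos; [apply Rmult_le_pos; [apply pos_INR|]|]; lra.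
    - rewrite <- Rmult_assoc. apply Rmult_le_compat_r; [exact Hp|].
      unfold PS_mult. rewrite scal_sum, <- (Rmult_1_l (a (S (S n)))).
      replace (INR (S (S n)) * (1 * a (S (S n)))) with (sum_f_R0 (fun _ => a (S (S n))) (S n))
        by (rewrite sum_cte; ring).
      apply sum_Rle. intros j Hj. rewrite Rmult_comm. apply exp_tail_coef_le_mul. exact Hj. }
  lra.
Qed.

Definition lambda_inv (m : nat) (l : R) : R :=
  l + / (INR (Factorial.fact m) * exp_tail (S m) l).

Section LambdaInverse.

Variable m : nat.

Lemma fact_exp_tail_pos l : 0 <= l -> 0 < INR (Factorial.fact m) * exp_tail (S m) l.
Proof. intro Hl. apply Rmult_lt_0_compat; [apply INR_fact_lt_0|apply exp_tail_pos, Hl]. Qed.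

Lemma is_derive_lambda_inv l : 0 < l ->
  is_derive (lambda_inv m) l
    (1 + - (INR (Factorial.fact m) * PSeries (PS_derive (exp_tail_coef (S m))) l)
         / (INR (Factorial.fact m) * exp_tail (S m) l) ^ 2).
Proof.
  intro Hl. apply (is_derive_plus (fun y => y) (fun y => / (INR (Factorial.fact m) * exp_tail (S m) y))).
  - apply (@is_derive_id R_AbsRing).
  - apply (is_derive_inv (fun y => INR (Factorial.fact m) * exp_tail (S m) y)).
    + apply (is_derive_scal (exp_tail (S m))), is_derive_PSeries, exp_tail_inside.
    + apply Rgt_not_eq, fact_exp_tail_pos. lra.
Qed.

Lemma lambda_inv_lt l1 l2 : 0 < l1 -> l1 < l2 -> lambda_inv m l1 < lambda_inv m l2.
Proof.
  intros H1 H12. apply (incr_function _ (Finite 0) p_infty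
    (fun l => 1 + - (INR (Factorial.fact m) * PSeries (PS_derive (exp_tail_coef (S m))) l)
                / (INR (Factorial.fact m) * exp_tail (S m) l) ^ 2)); simpl; auto; try lra.
  - intros l Hl _. exact (is_derive_lambda_inv l Hl).
  - intros l Hl _.
    assert (Hd := exp_tail_derive_lt m l (Rlt_le _ _ Hl)).
    assert (Hc := INR_fact_lt_0 m). assert (HE := fact_exp_tail_pos l (Rlt_le _ _ Hl)).
    set (c := INR (Factorial.fact m)) in *. set (D := PSeries _ l) in *.
    set (E := exp_tail (S m) l) in *.
    assert (Hq : c * D / (c * E) ^ 2 < 1).
    { apply Rlt_div_l; [apply pow_lt, HE|].
      apply Rlt_le_trans with (c * (c * (E * E))); [apply Rmult_lt_compat_l; lra|right; ring]. }
    unfold Rdiv in *. rewrite Ropp_mult_distr_l_reverse. simpl in Hq. lra.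
Qed.

Lemma continuous_lambda_inv l : 0 < l -> continuity_pt (lambda_inv m) l.
Proof.
  intro Hl. apply continuity_pt_filterlim.
  apply (ex_derive_continuous (lambda_inv m)).
  eexists. exact (is_derive_lambda_inv l Hl).
Qed.

Lemma is_lambda_iff x l : 0 < l -> is_lambda (S m) x l <-> lambda_inv m l = x.
Proof.
  intro Hl. unfold is_lambda, lambda_inv.
  replace (S m - 1)%nat with m by lia.
  rewrite !f_exp_tail, exp_tail_S.
  assert (Hc := INR_fact_lt_0 m). assert (HE := exp_tail_pos (S m) l (Rlt_le _ _ Hl)).
  assert (Hscale : 0 < exp (- l) * l ^ S m) by (apply Rmult_lt_0_compat; [apply exp_pos|apply pow_lt, Hl]).
  set (c := INR (Factorial.fact m)) in *. set (E := exp_tail (S m) l) in *.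
  set (s := exp (- l) * l ^ S m) in *.
  replace (l * (exp (- l) * (l ^ m * (/ c + l * E)))) with (s * (/ c + l * E)) by (unfold s; simpl; ring).
  replace (x * (exp (- l) * (l ^ S m * E))) with (s * (x * E)) by (unfold s; ring).
  split.
  - intros [_ H]. apply Rmult_eq_reg_l in H; [|lra].
    apply (Rmult_eq_reg_r E); [|lra]. rewrite <- H. field. lra.
  - intro H. split; [exact Hl|]. f_equal. rewrite <- H. field. lra.
Qed.

Lemma lambda_spec x : INR (S m) < x -> is_lambda (S m) x (lambda (S m) x).
Proof.
  intro Hx. unfold lambda. apply epsilon_spec.
  assert (HS : 0 < INR (S m)) by (apply lt_0_INR; lia).
  set (l0 := (x - INR (S m)) / 2).
  assert (Hl0 : 0 < l0) by (unfold l0; lra).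
  assert (Hlow : lambda_inv m l0 - x < 0).
  { unfold lambda_inv.
    assert (Hb := inv_fact_le_exp_tail (S m) l0 (Rlt_le _ _ Hl0)).
    assert (HE := fact_exp_tail_pos l0 (Rlt_le _ _ Hl0)).
    assert (Hc := INR_fact_lt_0 m).
    rewrite fact_simpl, mult_INR in Hb.
    assert (/ (INR (Factorial.fact m) * exp_tail (S m) l0) <= INR (S m)).
    { rewrite <- (Rinv_inv (INR (S m))).
      apply Rinv_le_contravar; [apply Rinv_0_lt_compat, HS|].
      replace (/ INR (S m)) with (INR (Factorial.fact m) * / (INR (S m) * INR (Factorial.fact m)))
        by (field; lra).
      apply Rmult_le_compat_l; lra. }
    unfold l0 in *. lra. }
  assert (Hhigh : 0 < lambda_inv m x - x).
  { unfold lambda_inv. assert (0 < / (INR (Factorial.fact m) * exp_tail (S m) x)).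
    { apply Rinv_0_lt_compat, fact_exp_tail_pos. lra. }
    lra. }
  destruct (Ranalysis5.IVT_interv (fun l => lambda_inv m l - x) l0 x) as [l [Hl Hroot]];
    [|unfold l0; lra|exact Hlow|exact Hhigh|].
  - intros b Hb. apply continuity_pt_minus; [apply continuous_lambda_inv; lra|].
    apply continuity_pt_const. intros ? ?. reflexivity.
  - exists l. apply is_lambda_iff; lra.
Qed.

Lemma lambda_pos x : INR (S m) < x -> 0 < lambda (S m) x.
Proof. intro Hx. exact (proj1 (lambda_spec x Hx)). Qed.

Lemma lambda_inv_lambda x : INR (S m) < x -> lambda_inv m (lambda (S m) x) = x.
Proof. intro Hx. apply (is_lambda_iff x); [apply lambda_pos|apply lambda_spec]; exact Hx. Qed.

Lemma lambda_lt x y : INR (S m) < x -> x < y -> lambda (S m) x < lambda (S m) y.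
Proof.
  intros Hx Hxy. assert (Hy : INR (S m) < y) by lra.
  destruct (Rlt_or_le (lambda (S m) x) (lambda (S m) y)) as [Hlt|Hle]; [exact Hlt|].
  exfalso. destruct (Rle_lt_or_eq _ _ Hle) as [Hlt|Heq].
  - assert (H := lambda_inv_lt _ _ (lambda_pos y Hy) Hlt).
    rewrite !lambda_inv_lambda in H by assumption. lra.
  - assert (H := lambda_inv_lambda x Hx). rewrite <- Heq, lambda_inv_lambda in H by assumption. lra.
Qed.

Lemma psi_lambda x : INR (S m) < x ->
  psi (S m) x = / (INR (Factorial.fact m) * exp_tail m (lambda (S m) x)).
Proof.
  intro Hx. assert (Hl := lambda_pos x Hx).
  unfold psi. set (l := lambda (S m) x) in *.
  replace (S m - 1)%nat with m by lia. rewrite f_exp_tail.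
  assert (Hc := INR_fact_lt_0 m). assert (He := exp_pos (- l)).
  assert (Hp : 0 < l ^ m) by (apply pow_lt, Hl).
  assert (HE := exp_tail_pos m l (Rlt_le _ _ Hl)).
  field. repeat split; lra.
Qed.

End LambdaInverse.

Theorem lemma51 (k : nat) (hk : (2 <= k)%nat) :
  forall x y : R, INR k < x -> x < y -> psi k y < psi k x.
Proof.
  intros x y Hx Hxy. destruct k as [|m]; [lia|].
  rewrite !psi_lambda by lra.
  assert (Hlx := lambda_pos m x Hx).
  assert (Hlt := lambda_lt m x y Hx Hxy).
  apply Rinv_lt_contravar.
  - apply Rmult_lt_0_compat; apply Rmult_lt_0_compat;
      solve [apply INR_fact_lt_0 | apply exp_tail_pos; lra].
  - apply Rmult_lt_compat_l; [apply INR_fact_lt_0|]. apply exp_tail_lt; lra.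
Qed.
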